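(* Let $q$ be an indeterminate and let $\mathbf{Sym}(A)$ be the algebra of noncommutative symmetric functions over $\mathbb{C}(q)$ with generators $S_n=S_n(A)$, $S_0=1$. Define $f_0=1$ and, for $n\ge1$, $f_n\in\mathbf{Sym}(A)$ by $$f_n=\sum_{k+l=n} q^k f_k\, S_l((k+1)A),\quad\text{i.e.}\quad (1-q^n)f_n=\sum_{k=0}^{n-1}q^k f_k\,S_{n-k}((k+1)A).$$ Let $L$ be the linear endomorphism of $\mathbf{Sym}(A)$ defined on the basis $S^I$ by $$L(S^I)=S_{i_1}(A)\,S_{i_2}((i_1+1)A)\,S_{i_3}((i_1+i_2+1)A)\cdots S_{i_r}((i_1+\cdots+i_{r-1}+1)A).$$ Then for every $n\ge1$, $$f_n=\sum_{I\vDash n}\frac{q^{\mathrm{maj}(I)}}{(1-q^{i_1})(1-q^{i_1+i_2})\cdots(1-q^{i_1+\cdots+i_r})}\,L(S^I),$$ where the sum runs over compositions $I=(i_1,\dots,i_r)$ of $n$; equivalently $f_n=L\big(S_n(A/(1-q))\big)$.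
   Context: For $m\ge1$, $S_l(mA)$ denotes the coefficient of $t^l$ in $\big(\sum_{k\ge0}S_k t^k\big)^m$. For a composition $I=(i_1,\dots,i_r)$, $S^I=S_{i_1}\cdots S_{i_r}$ and $\mathrm{maj}(I)=(r-1)i_1+(r-2)i_2+\cdots+i_{r-1}$ (the sum of the elements of the descent set $\{i_1,i_1+i_2,\dots,i_1+\cdots+i_{r-1}\}$). The notation $S_n(A/(1-q))$ stands for $\sum_{I\vDash n}\frac{q^{\mathrm{maj}(I)}}{\prod_{k=1}^r(1-q^{i_1+\cdots+i_k})}S^I$. *)

From HB Require Import structures.
From mathcomp Require Import all_boot all_order all_algebra all_field.
Set Implicit Arguments. Unset Strict Implicit. Unset Printing Implicit Defensive.
Import Order.TTheory GRing.Theory Num.Theory.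
Local Open Scope ring_scope.

(* Ground field C(q): rational functions in one indeterminate over the
   algebraic complex numbers algC, and the indeterminate q. *)
Definition Kq : fieldType := {fraction {poly algC}}.
Definition qq : Kq := tofrac ('X : {poly algC}).

(* Noncommutative symmetric functions over K, modelled as the (completed)
   free associative algebra on letters S_1, S_2, ...: an element is a
   coefficient function on words (seq nat); the word [:: i1; ...; ir] stands
   for S^I = S_i1 ... S_ir.
   Every polynomial element lives in the span of words with positive letters;
   Sym(A) embeds injectively, so identities in it are identities here. *)
Definition Sym (K : fieldType) := seq nat -> K.

Section SymOps.
Variable K : fieldType.
Definition szero : Sym K := fun _ => 0.
Definition sone : Sym K := fun w => (w == [::])%:R.
Definition sadd (f g : Sym K) : Sym K := fun w => f w + g w.
Definition sscale (c : K) (f : Sym K) : Sym K := fun w => c * f w.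
Definition smul (f g : Sym K) : Sym K :=
  fun w => \sum_(i < (size w).+1) f (take i w) * g (drop i w).
Definition ssum (T : Type) (s : seq T) (F : T -> Sym K) : Sym K :=
  fun w => \sum_(x <- s) F x w.

Definition Sgen (k : nat) : Sym K :=
  if k == 0%N then sone else fun w => (w == [:: k])%:R.

(* S_l(mA) = coefficient of t^l in (sum_k S_k t^k)^m, computed via
   P^(m+1) = P^m * P *)
Fixpoint Sm (m l : nat) : Sym K :=
  match m with
  | 0%N => if l == 0%N then sone else szero
  | m'.+1 => ssum (iota 0 l.+1) (fun j => smul (Sm m' j) (Sgen (l - j)))
  end.

Fixpoint LS_aux (acc : nat) (s : seq nat) : Sym K :=
  match s with
  | [::] => sone
  | i :: s' => smul (Sm acc.+1 i) (LS_aux (acc + i) s')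
  end.
Definition LS (s : seq nat) : Sym K := LS_aux 0 s.
End SymOps.

Fixpoint words (r n : nat) : seq (seq nat) :=
  match r with
  | 0%N => [:: [::]]
  | r'.+1 => [seq i :: w | i <- iota 1 n, w <- words r' n]
  end.

Definition compositions (n : nat) : seq (seq nat) :=
  [seq s <- flatten [seq words r n | r <- iota 0 n.+1] | sumn s == n].

Definition maj (s : seq nat) : nat :=
  \sum_(j < (size s).-1) sumn (take j.+1 s).

Definition qden (q : Kq) (s : seq nat) : Kq :=
  \prod_(k < size s) (1 - q ^+ sumn (take k.+1 s)).

From HB Require Import structures.
From mathcomp Require Import all_boot all_order all_algebra all_field.
From Stdlib Require Import FunctionalExtensionality.
From mathcomp Require Import zify.
Import GRing.Theory.

(* The right-hand side g_n satisfies the same recurrence as f_n.  Split a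
   composition I of n by its last part as I = J.(n-k) with J a composition of
   k < n: then maj I = maj J + k, the denominator of I is that of J times
   1 - q^n, and L(S^I) = L(S^J) S_{n-k}((k+1)A).  Hence
   (1 - q^n) g_n = sum_k q^k g_k S_{n-k}((k+1)A), and since 1 - q^n <> 0 in
   C(q) this recurrence determines every term from the previous ones. *)

Lemma mem_words r n w :
  (w \in words r n) = (size w == r) && all (fun i => 0 < i <= n) w.
Proof.
elim: r w => [|r IH] w; first by case: w.
apply/allpairsP/idP => [[[b w'] /= [b_in w'_in ->]]|].
  by move: b_in w'_in; rewrite mem_iota add1n IH /= eqSS => -> /andP [-> ->].
case: w => [|a w] //= /and3P [sw a_in w_in].
by exists (a, w); rewrite mem_iota add1n a_in IH -eqSS sw.
Qed.

Lemma uniq_words r n : uniq (words r n).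
Proof.
elim: r => [|r IH] //=; apply: allpairs_uniq => //; first exact: iota_uniq.
by move=> [a b] [c d] _ _ /= [-> ->].
Qed.

Lemma size_le_sumn s : all (fun i => 0 < i) s -> size s <= sumn s.
Proof. by elim: s => //= a s IH /andP [a_gt0 /IH]; rewrite -add1n; apply: leq_add. Qed.

Lemma leq_sumn_mem s i : i \in s -> i <= sumn s.
Proof.
elim: s => //= a s IH; rewrite inE => /orP [/eqP ->|/IH]; first exact: leq_addr.
by move/leq_trans; apply; apply: leq_addl.
Qed.

Lemma mem_compositions n s :
  (s \in compositions n) = (sumn s == n) && all (fun i => 0 < i) s.
Proof.
rewrite mem_filter; apply/andP/andP => [[/eqP sn /flatten_mapP [r _]]|[/eqP sn s_pos]].
  rewrite mem_words sn => /andP [_ s_in]; split => //.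
  by apply: sub_all s_in => i /andP [].
split; first by rewrite sn.
apply/flatten_mapP; exists (size s); first by rewrite mem_iota ltnS -sn size_le_sumn.
rewrite mem_words eqxx; apply/allP => i i_in.
by rewrite (allP s_pos) //= -sn leq_sumn_mem.
Qed.

Lemma uniq_compositions n : uniq (compositions n).
Proof.
apply: filter_uniq.
have -> : flatten [seq words r n | r <- iota 0 n.+1] =
          [seq w | r <- iota 0 n.+1, w <- words r n].
  by congr flatten; apply: eq_map => r; rewrite map_id.
apply: allpairs_uniq_dep => [|r _|]; [exact: iota_uniq | exact: uniq_words |].
move=> _ _ /allpairsPdep [r [w [_ w_in ->]]] /allpairsPdep [r' [w' [_ w'_in ->]]] /=.
move: w_in w'_in; rewrite !mem_words => /andP [/eqP <- _] /andP [/eqP <- _].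
by move=> ->.
Qed.

Lemma perm_compositions_rcons n : 0 < n ->
  perm_eq (compositions n)
          [seq rcons J (n - k) | k <- iota 0 n, J <- compositions k].
Proof.
move=> n_gt0; apply: uniq_perm; first exact: uniq_compositions.
  apply: allpairs_uniq_dep => [|k _|]; [exact: iota_uniq | exact: uniq_compositions |].
  move=> _ _ /allpairsPdep [k [J [k_in _ ->]]] /allpairsPdep [k' [J' [k'_in _ ->]]] /=.
  move: k_in k'_in; rewrite !mem_iota /= => k_lt k'_lt /rcons_inj [-> nk].
  by have -> : k = k' by lia.
move=> I; rewrite mem_compositions; apply/andP/allpairsPdep.
  case/lastP: I => [[/eqP n0]|J l]; first by move: n_gt0; rewrite -n0.
  rewrite sumn_rcons all_rcons => -[/eqP <- /andP [l_gt0 J_pos]].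
  exists (sumn J), J; rewrite mem_iota mem_compositions eqxx J_pos addKn.
  by split=> //; lia.
move=> [k [J [k_in J_in ->]]]; move: k_in J_in.
rewrite mem_iota mem_compositions sumn_rcons all_rcons => /andP [_ k_lt] /andP [/eqP -> ->].
by rewrite andbT; split; lia.
Qed.

Local Open Scope ring_scope.

Section SymAlgebra.
Context {K : fieldType}.
Implicit Types (f g h : Sym K) (c : K).

Lemma sum_nat_triangle (N : nat) (A : nat -> nat -> K) :
  \sum_(0 <= i < N) \sum_(0 <= j < i.+1) A i j =
  \sum_(0 <= j < N) \sum_(j <= i < N) A i j.
Proof.
elim: N => [|N IH]; first by rewrite !big_geq.
rewrite big_nat_recr //= IH [RHS]big_nat_recr //= big_nat1.
rewrite [\sum_(0 <= j < N.+1) A N j]big_nat_recr //= addrA; congr (_ + _).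
rewrite -big_split /=; apply: eq_big_nat => j /andP [_ hj].
by rewrite big_nat_recr //= ltnW.
Qed.

Lemma smulE f g w :
  smul f g w = \sum_(0 <= i < (size w).+1) f (take i w) * g (drop i w).
Proof. by rewrite /smul big_mkord. Qed.

Lemma smulA f g h : smul (smul f g) h = smul f (smul g h).
Proof.
apply: functional_extensionality => w; rewrite !smulE.
transitivity (\sum_(0 <= i < (size w).+1) \sum_(0 <= j < i.+1)
   f (take j w) * g (take (i - j) (drop j w)) * h (drop i w)).
  apply: eq_big_nat => i /andP [_ hi].
  rewrite smulE size_takel // big_distrl /=.
  apply: eq_big_nat => j /andP [_ hj].
  by rewrite take_takel // take_drop subnK.
rewrite sum_nat_triangle; apply: eq_big_nat => j /andP [_ hj].
rewrite smulE size_drop big_distrr /= -subSn // -{1}(add0n j) big_addn.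
by apply: eq_big_nat => i _; rewrite addnK drop_drop mulrA.
Qed.

Lemma smul1s f : smul (sone K) f = f.
Proof.
apply: functional_extensionality => w; rewrite /smul big_ord_recl /= /sone.
rewrite take0 drop0 eqxx mul1r big1 ?addr0 // => i _.
by case: w i => [|a w] [i hi] //=; rewrite mul0r.
Qed.

Lemma smuls1 f : smul f (sone K) = f.
Proof.
apply: functional_extensionality => w; rewrite /smul big_ord_recr /= /sone.
rewrite take_size drop_size eqxx mulr1 big1 ?add0r // => i _.
have : size (drop i w) != 0%N by rewrite size_drop subn_eq0 -ltnNge.
by case: (drop i w) => //= _ _; rewrite mulr0.
Qed.

Lemma smul_suml (T : Type) (s : seq T) (F : T -> Sym K) h :
  smul (ssum s F) h = ssum s (fun x => smul (F x) h).
Proof.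
apply: functional_extensionality => w; rewrite /smul /ssum exchange_big /=.
by apply: eq_bigr => i _; exact: big_distrl.
Qed.

Lemma smul_scalel c f g : smul (sscale c f) g = sscale c (smul f g).
Proof.
apply: functional_extensionality => w; rewrite /smul /sscale big_distrr /=.
by apply: eq_bigr => i _; rewrite mulrA.
Qed.

Lemma sscale_inj c f g : c != 0 -> sscale c f = sscale c g -> f = g.
Proof.
move=> c_neq0 /(congr1 (fun F => F _)) fg; apply: functional_extensionality.
by move=> w; apply: (mulfI c_neq0); exact: fg.
Qed.

Lemma eq_ssum_in (T : eqType) (s : seq T) (F G : T -> Sym K) :
  {in s, F =1 G} -> ssum s F = ssum s G.
Proof.
move=> FG; apply: functional_extensionality => w.
by apply: eq_big_seq => x /FG ->.
Qed.

Lemma LS_aux_rcons acc I l :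
  LS_aux K acc (rcons I l) = smul (LS_aux K acc I) (Sm K (acc + sumn I).+1 l).
Proof.
elim: I acc => [|i I IH] acc /=; first by rewrite addn0 smuls1 smul1s.
by rewrite IH smulA addnA.
Qed.

Definition q_recurrence (q : K) (f : nat -> Sym K) : Prop :=
  f 0%N = sone K /\
  forall n, (0 < n)%N ->
    sscale (1 - q ^+ n) (f n) =
    ssum (iota 0 n) (fun k => sscale (q ^+ k) (smul (f k) (Sm K k.+1 (n - k)))).

Lemma q_recurrence_unique {q : K} {f g : nat -> Sym K} :
  (forall n, (0 < n)%N -> 1 - q ^+ n != 0) ->
  q_recurrence q f -> q_recurrence q g -> f =1 g.
Proof.
move=> qn_neq1 [f0 f_rec] [g0 g_rec]; elim/ltn_ind => -[|n] IH; first by rewrite f0 g0.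
apply: (@sscale_inj _ (f n.+1) (g n.+1) (qn_neq1 _ (ltn0Sn n))).
rewrite f_rec // g_rec //.
by apply: eq_ssum_in => k; rewrite mem_iota => /andP [_ hk]; rewrite IH.
Qed.

End SymAlgebra.

Lemma maj_rcons I l : maj (rcons I l) = (maj I + sumn I)%N.
Proof.
rewrite /maj size_rcons /=; case: I => [|a I]; first by rewrite !big_ord0.
rewrite (eq_bigr (fun j : 'I_(size (a :: I)) => sumn (take j.+1 (a :: I)))).
  by rewrite big_ord_recr /= take_oversize.
by move=> j _; rewrite -cats1 takel_cat.
Qed.

Lemma qden_rcons (q : Kq) I l : qden q (rcons I l) = qden q I * (1 - q ^+ (sumn I + l)).
Proof.
rewrite /qden size_rcons big_ord_recr /= take_oversize ?size_rcons // sumn_rcons.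
by congr (_ * _); apply: eq_bigr => j _; rewrite -cats1 takel_cat.
Qed.

Lemma subr1_qqX_neq0 n : (0 < n)%N -> 1 - qq ^+ n != 0.
Proof.
move=> n_gt0; rewrite /qq -tofrac1 -tofracXn -tofracB tofrac_eq0 subr_eq0.
apply: contraTneq n_gt0 => /(congr1 (size : {poly algC} -> nat)).
by rewrite size_poly1 size_polyXn => -[<-].
Qed.

Definition composition_sum (q : Kq) (n : nat) : Sym Kq :=
  ssum (compositions n) (fun I => sscale (q ^+ maj I / qden q I) (LS Kq I)).

Lemma composition_sum0 (q : Kq) : composition_sum q 0 = sone Kq.
Proof.
apply: functional_extensionality => w.
by rewrite /composition_sum /ssum big_seq1 /sscale /maj /qden !big_ord0 divr1 mul1r.
Qed.

Lemma composition_coef_rcons (q : Kq) J l : 1 - q ^+ (sumn J + l) != 0 ->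
  (1 - q ^+ (sumn J + l)) * q ^+ maj (rcons J l) / qden q (rcons J l) =
  q ^+ sumn J * q ^+ maj J / qden q J.
Proof.
rewrite maj_rcons qden_rcons; set a := 1 - _ => a_neq0.
rewrite invfM exprD mulrA [a * _]mulrC -!mulrA [a * _]mulrCA mulfV // mulr1.
by rewrite !mulrA [q ^+ sumn J * _]mulrC.
Qed.

Lemma composition_sum_q_recurrence (q : Kq) :
  (forall n, (0 < n)%N -> 1 - q ^+ n != 0) -> q_recurrence q (composition_sum q).
Proof.
move=> qn_neq1; split=> [|n n_gt0]; first exact: composition_sum0.
apply: functional_extensionality => w.
rewrite /composition_sum /sscale /ssum (perm_big _ (perm_compositions_rcons n n_gt0)).
rewrite big_allpairs_dep big_distrr; apply: eq_big_seq => k.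
rewrite mem_iota add0n => /andP [_ k_lt]; rewrite smul_suml /ssum !big_distrr.
apply: eq_big_seq => J; rewrite mem_compositions => /andP [/eqP Jk _]; subst k.
rewrite smul_scalel /sscale /LS LS_aux_rcons /= add0n !mulrA; congr (_ * _).
have n_eq : (sumn J + (n - sumn J))%N = n := subnKC (ltnW k_lt).
by rewrite -{1}n_eq composition_coef_rcons // n_eq qn_neq1.
Qed.

Theorem mainTheorem6 (f : nat -> Sym Kq) :
  f 0%N = sone Kq ->
  (forall n : nat, (0 < n)%N ->
     sscale (1 - qq ^+ n) (f n) =
     ssum (iota 0 n)
          (fun k => sscale (qq ^+ k) (smul (f k) (Sm Kq k.+1 (n - k))))) ->
  forall n : nat, (0 < n)%N ->
    f n = ssum (compositions n)
               (fun I => sscale (qq ^+ maj I / qden qq I) (LS Kq I)).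
Proof.
move=> f0 f_rec n _.
have g_rec := composition_sum_q_recurrence qq subr1_qqX_neq0.
exact: (q_recurrence_unique subr1_qqX_neq0 (conj f0 f_rec) g_rec n).
Qed.
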